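(* The upper and lower Vietoris functors $\mathbb{V}^{\uparrow},\mathbb{V}^{\downarrow}\colon\mathbf{StComp}\to\mathbf{StComp}$ preserve coreflexive equalizers: if $f,g\colon X\to Y$ are perfect maps between stably compact spaces with a common retraction $k\colon Y\to X$ ($k\circ f=k\circ g=1_X$) and $h\colon E\to X$ is an equalizer of $f,g$ in $\mathbf{StComp}$, then $\mathbb{V}^{\uparrow}h$ is an equalizer of $\mathbb{V}^{\uparrow}f,\mathbb{V}^{\uparrow}g$, and $\mathbb{V}^{\downarrow}h$ is an equalizer of $\mathbb{V}^{\downarrow}f,\mathbb{V}^{\downarrow}g$, in $\mathbf{StComp}$.
   Context: A stably compact space is a $T_0$ space that is compact, locally compact, coherent (the intersection of two compact saturated sets is compact) and well-filtered. A map between stably compact spaces is perfect if it is continuous and preimages of compact saturated sets are compact saturated; $\mathbf{StComp}$ is the category of stably compact spaces and perfect maps. The order on a stably compact space is its specialization order ($x\le y$ iff every open set containing $x$ contains $y$); $\uparrow$, $\downarrow$ denote up- and down-closure. The upper Vietoris hyperspace $\mathbb{V}^{\uparrow}X$ is the set of compact saturated subsets of $X$ with topology generated by $\Box U=\{K\mid K\subseteq U\}$ ($U$ open), and $\mathbb{V}^{\uparrow}f(K)=\uparrow f[K]$. The lower Vietoris hyperspace $\mathbb{V}^{\downarrow}X$ is the set of closed subsets of $X$ with topology generated by $\Diamond U=\{C\mid C\cap U\neq\varnothing\}$ ($U$ open), and $\mathbb{V}^{\downarrow}f(C)=\downarrow f[C]$. Both are endofunctors on $\mathbf{StComp}$.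 *)

From Stdlib Require Import List ClassicalEpsilon FunctionalExtensionality
  PropExtensionality.
Import ListNotations.

Record space : Type := Space {
  pt :> Type;
  opn : (pt -> Prop) -> Prop;
  opn_full : opn (fun _ => True);
  opn_inter : forall U V, opn U -> opn V -> opn (fun x => U x /\ V x);
  opn_union : forall F : (pt -> Prop) -> Prop,
      (forall U, F U -> opn U) -> opn (fun x => exists U, F U /\ U x)
}.

Section Topology.
Variable X : space.

Definition subset (A B : X -> Prop) : Prop := forall x, A x -> B x.

Definition closed (C : X -> Prop) : Prop := opn X (fun x => ~ C x).

Definition spec_le (x y : X) : Prop := forall U, opn X U -> U x -> U y.

Definition up (A : X -> Prop) : X -> Prop := fun y => exists x, A x /\ spec_le x y.
Definition down (A : X -> Prop) : X -> Prop := fun y => exists x, A x /\ spec_le y x.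

Definition saturated (A : X -> Prop) : Prop :=
  forall x y, A x -> spec_le x y -> A y.

Definition compact (K : X -> Prop) : Prop :=
  forall F : (X -> Prop) -> Prop,
    (forall U, F U -> opn X U) ->
    (forall x, K x -> exists U, F U /\ U x) ->
    exists l : list (X -> Prop),
      (forall U, In U l -> F U) /\ (forall x, K x -> exists U, In U l /\ U x).

Definition compact_saturated (K : X -> Prop) : Prop := compact K /\ saturated K.

Definition T0 : Prop := forall x y, spec_le x y -> spec_le y x -> x = y.

Definition locally_compact : Prop :=
  forall x U, opn X U -> U x ->
    exists V K, opn X V /\ compact K /\ V x /\ subset V K /\ subset K U.

Definition coherent : Prop :=
  forall K1 K2, compact_saturated K1 -> compact_saturated K2 ->
    compact (fun x => K1 x /\ K2 x).

Definition well_filtered : Prop :=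
  forall F : (X -> Prop) -> Prop,
    (exists K, F K) ->
    (forall K, F K -> compact_saturated K) ->
    (forall K1 K2, F K1 -> F K2 ->
        exists K3, F K3 /\ forall x, K3 x -> K1 x /\ K2 x) ->
    forall U, opn X U ->
      (forall x, (forall K, F K -> K x) -> U x) ->
      exists K, F K /\ subset K U.

Definition stably_compact : Prop :=
  T0 /\ compact (fun _ => True) /\ locally_compact /\ coherent /\ well_filtered.

End Topology.

Arguments subset {X}.
Arguments closed {X}.
Arguments spec_le {X}.
Arguments up {X}.
Arguments down {X}.
Arguments saturated {X}.
Arguments compact {X}.
Arguments compact_saturated {X}.

Definition continuous {X Y : space} (f : X -> Y) : Prop :=
  forall V, opn Y V -> opn X (fun x => V (f x)).

Definition perfect {X Y : space} (f : X -> Y) : Prop :=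
  continuous f /\
  forall K : Y -> Prop, compact_saturated K ->
    compact_saturated (fun x => K (f x)).

Definition gen_top {T : Type} (B : (T -> Prop) -> Prop) : (T -> Prop) -> Prop :=
  fun U => forall O : (T -> Prop) -> Prop,
    O (fun _ => True) ->
    (forall U V, O U -> O V -> O (fun x => U x /\ V x)) ->
    (forall F : (T -> Prop) -> Prop, (forall U, F U -> O U) ->
        O (fun x => exists U, F U /\ U x)) ->
    (forall S, B S -> O S) -> O U.

Lemma gen_top_full {T} (B : (T -> Prop) -> Prop) : gen_top B (fun _ => True).
Proof. intros O H1 H2 H3 H4; exact H1. Qed.

Lemma gen_top_inter {T} (B : (T -> Prop) -> Prop) U V :
  gen_top B U -> gen_top B V -> gen_top B (fun x => U x /\ V x).
Proof. intros HU HV O H1 H2 H3 H4; apply H2; [apply HU|apply HV]; auto. Qed.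

Lemma gen_top_union {T} (B : (T -> Prop) -> Prop) (F : (T -> Prop) -> Prop) :
  (forall U, F U -> gen_top B U) -> gen_top B (fun x => exists U, F U /\ U x).
Proof. intros HF O H1 H2 H3 H4; apply H3; intros U HU; apply HF; auto. Qed.

Definition gen_space (T : Type) (B : (T -> Prop) -> Prop) : space :=
  @Space T (gen_top B) (gen_top_full B) (gen_top_inter B) (gen_top_union B).

Definition UpV_carrier (X : space) : Type := {K : X -> Prop | compact_saturated K}.

Definition Box {X : space} (U : X -> Prop) : UpV_carrier X -> Prop :=
  fun K => subset (proj1_sig K) U.

Definition UpV (X : space) : space :=
  gen_space (UpV_carrier X) (fun S => exists U, opn X U /\ S = Box U).

Lemma empty_compact_saturated (X : space) :
  @compact_saturated X (fun _ => False).
Proof.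
  split.
  - intros F _ _. exists nil. split; [intros U []|intros x []].
  - intros x y [].
Qed.

Definition emptyK (X : space) : UpV X :=
  exist _ (fun _ => False) (empty_compact_saturated X).

(* V^up f (K) = up (f[K]).  For continuous f this is always compact saturated;
   the else-branch (never used for perfect maps) only makes the map total. *)
Definition UpV_map {X Y : space} (f : X -> Y) (K : UpV X) : UpV Y :=
  match excluded_middle_informative
          (compact_saturated (up (fun y => exists x, proj1_sig K x /\ f x = y)))
  with
  | left p => exist _ _ p
  | right _ => emptyK Y
  end.

Definition LoV_carrier (X : space) : Type := {C : X -> Prop | closed C}.

Definition Diamond {X : space} (U : X -> Prop) : LoV_carrier X -> Prop :=
  fun C => exists x, proj1_sig C x /\ U x.

Definition LoV (X : space) : space :=
  gen_space (LoV_carrier X) (fun S => exists U, opn X U /\ S = Diamond U).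

Lemma empty_closed (X : space) : @closed X (fun _ => False).
Proof.
  unfold closed.
  replace (fun x : X => ~ False) with (fun _ : X => True).
  - apply opn_full.
  - apply functional_extensionality; intros x;
      apply propositional_extensionality; tauto.
Qed.

Definition emptyC (X : space) : LoV X := exist _ (fun _ => False) (empty_closed X).

(* V^down f (C) = down (f[C]).  For perfect maps between stably compact
   spaces this is closed; the else-branch only makes the map total. *)
Definition LoV_map {X Y : space} (f : X -> Y) (C : LoV X) : LoV Y :=
  match excluded_middle_informative
          (closed (down (fun y => exists x, proj1_sig C x /\ f x = y)))
  with
  | left p => exist _ _ p
  | right _ => emptyC Y
  end.

Definition is_StComp_equalizer {E X Y : space} (h : E -> X) (f g : X -> Y) : Prop :=
  perfect h /\ (forall e, f (h e) = g (h e)) /\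
  forall (Z : space), stably_compact Z ->
  forall m : Z -> X, perfect m -> (forall z, f (m z) = g (m z)) ->
    exists u : Z -> E, perfect u /\ (forall z, h (u z) = m z) /\
      forall u' : Z -> E, perfect u' -> (forall z, h (u' z) = m z) ->
        forall z, u' z = u z.

From Stdlib Require Import List Classical ClassicalEpsilon FunctionalExtensionality PropExtensionality
  ProofIrrelevance.
From mathcomp Require classical_sets.
Import ListNotations.

(* The equalizer [h] identifies [E] with the set of points [x] of [X] with
   [f x = g x], carrying the order and topology of [X].  Because [f] and [g] have a common
   retraction [k], a minimal point [m] of a compact set [K] with [up (f K) = up (g K)]
   satisfies [f m = g m] (applying [k] to [g y <= f m] gives [y <= m]); dually for maximal
   points of closed sets, which exist by well-filteredness.  So every element of the
   hyperspace equalizer is generated by its trace on [E], and the inverse-image map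
   [K |-> h^-1 K] factors every equalizing map through [V h], which is a perfect order
   embedding.  Perfectness rests on [h] sending closed sets to sets with closed lower
   closure (well-filteredness of [E], local compactness of [X]) and, for the lower
   hyperspace, on Alexander's subbase lemma. *)

Notation img p S := (fun y => exists x, S x /\ p x = y).
Notation "A <<= B" := (forall x, A x -> B x) (at level 70, no associativity).

Definition union_of {T : Type} (F : (T -> Prop) -> Prop) : T -> Prop :=
  fun t => exists U, F U /\ U t.

Lemma set_eq {T : Type} (A B : T -> Prop) : (forall x, A x <-> B x) -> A = B.
Proof.
  intros H; apply functional_extensionality; intros x.
  apply propositional_extensionality; auto.
Qed.

Lemma sig_eq {T : Type} {P : T -> Prop} (a b : {x | P x}) :
  proj1_sig a = proj1_sig b -> a = b.
Proof.
  destruct a as [a pa], b as [b pb]; simpl; intros ->.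
  f_equal; apply proof_irrelevance.
Qed.

Lemma opn_ext (X : space) (U V : X -> Prop) :
  opn X U -> (forall x, U x <-> V x) -> opn X V.
Proof. intros H E. rewrite <- (set_eq U V E). exact H. Qed.

Lemma compact_ext (X : space) (K L : X -> Prop) :
  compact K -> (forall x, K x <-> L x) -> compact L.
Proof. intros H E. rewrite <- (set_eq K L E). exact H. Qed.

Lemma opn_of_nbhds (X : space) (A : X -> Prop) :
  (forall x, A x -> exists V, opn X V /\ V x /\ V <<= A) -> opn X A.
Proof.
  intros H.
  apply opn_ext with (fun x => exists V, (opn X V /\ V <<= A) /\ V x).
  - apply opn_union. intros V [HV _]; exact HV.
  - intros x; split.
    + intros [V [[_ VA] Vx]]. exact (VA x Vx).
    + intros Ax. destruct (H x Ax) as [V [HV [Vx VA]]]. eauto.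
Qed.

Lemma closed_compl_open (X : space) (U : X -> Prop) : opn X U -> closed (fun x => ~ U x).
Proof.
  intros HU. apply opn_ext with U; [exact HU|].
  intros x; split; [tauto|apply NNPP].
Qed.

Lemma spec_refl (X : space) (x : X) : spec_le x x.
Proof. intros U _ Ux; exact Ux. Qed.

Lemma spec_trans (X : space) (x y z : X) : spec_le x y -> spec_le y z -> spec_le x z.
Proof. intros Hxy Hyz U HU Ux; exact (Hyz U HU (Hxy U HU Ux)). Qed.

Lemma closed_spec (X : space) (C : X -> Prop) x y : closed C -> C y -> spec_le x y -> C x.
Proof. intros HC Cy Hxy. apply NNPP; intros nCx. exact (Hxy _ HC nCx Cy). Qed.

Lemma continuous_spec {X Y : space} (f : X -> Y) x y :
  continuous f -> spec_le x y -> spec_le (f x) (f y).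
Proof. intros Hf Hxy U HU. exact (Hxy _ (Hf U HU)). Qed.

Lemma continuous_comp {X Y Z : space} (p : Y -> Z) (q : X -> Y) :
  continuous p -> continuous q -> continuous (fun x => p (q x)).
Proof. intros Hp Hq U HU. exact (Hq _ (Hp U HU)). Qed.

Lemma continuous_saturated {X Y : space} (f : X -> Y) (K : Y -> Prop) :
  continuous f -> saturated K -> saturated (fun x => K (f x)).
Proof. intros Hf HK x y Kx Hxy. exact (HK _ _ Kx (continuous_spec f x y Hf Hxy)). Qed.

Lemma up_img {X Y : space} (p : X -> Y) (S : X -> Prop) x : S x -> up (img p S) (p x).
Proof. intros Sx. exists (p x); split; [exists x; auto|apply spec_refl]. Qed.

Lemma down_img {X Y : space} (p : X -> Y) (S : X -> Prop) x : S x -> down (img p S) (p x).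
Proof. intros Sx. exists (p x); split; [exists x; auto|apply spec_refl]. Qed.

Lemma list_choice {A B : Type} (R : A -> B -> Prop) (l : list A) :
  (forall a, In a l -> exists b, R a b) ->
  exists l', (forall a, In a l -> exists b, In b l' /\ R a b) /\
             (forall b, In b l' -> exists a, In a l /\ R a b).
Proof.
  induction l as [|a l IH]; intros H.
  - exists nil; split; intros ? [].
  - destruct (H a (or_introl eq_refl)) as [b Hb].
    destruct IH as [l' [H1 H2]]; [intros a' Ha'; apply H; right; exact Ha'|].
    exists (b :: l'); split.
    + intros a' [<-|Ha']; [exists b; split; [left|]; auto|].
      destruct (H1 a' Ha') as [b' [? ?]]; exists b'; split; [right|]; auto.
    + intros b' [<-|Hb']; [exists a; split; [left|]; auto|].
      destruct (H2 b' Hb') as [a' [? ?]]; exists a'; split; [right|]; auto.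
Qed.

Lemma compact_image {X Y : space} (f : X -> Y) (K : X -> Prop) :
  continuous f -> compact K -> compact (img f K).
Proof.
  intros Hf HK F HF Hcov.
  destruct (HK (fun V => exists U, F U /\ V = (fun x => U (f x)))) as [l [Hl1 Hl2]].
  - intros V [U [FU ->]]. exact (Hf U (HF U FU)).
  - intros x Kx. destruct (Hcov (f x) (ex_intro _ x (conj Kx eq_refl))) as [U [FU Ux]].
    exists (fun x => U (f x)); eauto.
  - destruct (list_choice (fun V U => F U /\ V = (fun x => U (f x))) l Hl1) as [l' [H1 H2]].
    exists l'; split.
    + intros U HU. destruct (H2 U HU) as [V [_ [FU _]]]; exact FU.
    + intros y [x [Kx <-]]. destruct (Hl2 x Kx) as [V [InV Vx]].
      destruct (H1 V InV) as [U [InU [_ ->]]]. eauto.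
Qed.

Lemma compact_up (X : space) (K : X -> Prop) : compact K -> compact (up K).
Proof.
  intros HK F HF Hcov.
  destruct (HK F HF) as [l [H1 H2]].
  - intros x Kx. apply Hcov. exists x; split; [exact Kx|apply spec_refl].
  - exists l; split; [exact H1|]. intros y [x [Kx Hxy]].
    destruct (H2 x Kx) as [U [InU Ux]]. exists U; split; [exact InU|].
    exact (Hxy U (HF U (H1 U InU)) Ux).
Qed.

Lemma up_saturated (X : space) (K : X -> Prop) : saturated (up K).
Proof. intros x y [z [Kz Hzx]] Hxy. exists z; split; [exact Kz|]. eapply spec_trans; eauto. Qed.

Lemma up_compact_saturated (X : space) (K : X -> Prop) :
  compact K -> compact_saturated (up K).
Proof. intros HK; split; [exact (compact_up X K HK)|apply up_saturated]. Qed.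

Lemma principal_compact_saturated (X : space) (x : X) : compact_saturated (spec_le x).
Proof.
  split.
  - intros F HF Hcov. destruct (Hcov x (spec_refl X x)) as [U [FU Ux]].
    exists [U]; split; [intros V [<-|[]]; exact FU|].
    intros y Hxy. exists U; split; [left; reflexivity|exact (Hxy U (HF U FU) Ux)].
  - intros y z Hxy Hyz. eapply spec_trans; eauto.
Qed.

Lemma compact_directed_cover {X : space} {I : Type} (K : X -> Prop) (W : I -> X -> Prop) (i0 : I) :
  compact K -> (forall i, opn X (W i)) ->
  (forall i j, exists k, W i <<= W k /\ W j <<= W k) ->
  (forall x, K x -> exists i, W i x) -> exists i, K <<= W i.
Proof.
  intros HK HW Hdir Hcov.
  destruct (HK (fun V => exists i, V = W i)) as [l [Hl1 Hl2]].
  - intros V [i ->]; apply HW.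
  - intros x Kx. destruct (Hcov x Kx) as [i Wi]. eauto.
  - assert (Hbound : exists k, forall V, In V l -> V <<= W k).
    { clear Hl2. induction l as [|V l IH].
      - exists i0; intros ? [].
      - destruct IH as [k Hk]; [intros V' HV'; apply Hl1; right; exact HV'|].
        destruct (Hl1 V (or_introl eq_refl)) as [i ->].
        destruct (Hdir i k) as [k' [Hik Hkk]].
        exists k'; intros V' [<-|HV'] x Vx; [exact (Hik x Vx)|exact (Hkk x (Hk V' HV' x Vx))]. }
    destruct Hbound as [k Hk]. exists k. intros x Kx.
    destruct (Hl2 x Kx) as [V [InV Vx]]. exact (Hk V InV x Vx).
Qed.

Definition chain {T : Type} (R : T -> T -> Prop) (C : T -> Prop) : Prop :=
  forall a b, C a -> C b -> R a b \/ R b a.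

Lemma zorn_above {T : Type} (P : (T -> Prop) -> Prop) (A0 : T -> Prop) :
  P A0 ->
  (forall F : (T -> Prop) -> Prop, (exists A, F A) -> (forall A, F A -> P A) ->
     chain (fun A B => A <<= B) F -> P (union_of F)) ->
  exists M, P M /\ A0 <<= M /\ forall N, P N -> M <<= N -> N <<= M.
Proof.
  intros HA0 Hunion.
  (* Zorn_bigcup needs [P set0]; shifting every set by [A0] provides it. *)
  pose (Q := fun B => P (fun x => A0 x \/ B x)).
  destruct (@classical_sets.Zorn_bigcup T Q) as [A [QA Amax]].
  - intros F FQ Ftot. change (P (fun x => A0 x \/ exists2 B, F B & B x)).
    destruct (classic (exists B, F B)) as [[B0 FB0]|Fempty].
    + set (G := fun C => exists B, F B /\ C = (fun x => A0 x \/ B x)).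
      replace (fun x => A0 x \/ (exists2 i, F i & i x)) with (union_of G).
      * apply Hunion.
        -- exists (fun x => A0 x \/ B0 x), B0; auto.
        -- intros C [B [FB ->]]. exact (FQ B FB).
        -- intros C1 C2 [B1 [FB1 ->]] [B2 [FB2 ->]].
           destruct (Ftot B1 B2 FB1 FB2) as [H12|H21]; [left|right];
             intros x [A0x|Bx]; auto.
      * apply set_eq; intros x; split.
        -- intros [C [[B [FB ->]] [A0x|Bx]]]; [left; exact A0x|right; exists B; auto].
        -- intros [A0x|[B FB Bx]].
           ++ exists (fun x => A0 x \/ B0 x); split; [exists B0; auto|left; exact A0x].
           ++ exists (fun x => A0 x \/ B x); split; [exists B; auto|right; exact Bx].
    + replace (fun x => A0 x \/ (exists2 i, F i & i x)) with A0; [exact HA0|].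
      apply set_eq; intros x; split; [intros A0x; left; exact A0x|].
      intros [A0x|[B FB _]]; [exact A0x|exfalso; eauto].
  - exists (fun x => A0 x \/ A x); split; [exact QA|split; [intros x A0x; left; exact A0x|]].
    intros N PN MN. assert (QN : Q N).
    { unfold Q. replace (fun x => A0 x \/ N x) with N; [exact PN|].
      apply set_eq; intros x; split; [intros Nx; right; exact Nx|intros [A0x|Nx]; auto]. }
    destruct (classic (N <<= A)) as [NA|nNA]; [intros x Nx; right; exact (NA x Nx)|].
    exfalso. apply (Amax N); [split; [intros x Ax; apply MN; right; exact Ax|exact nNA]|exact QN].
Qed.

Lemma exists_minimal_below {T : Type} (R : T -> T -> Prop) (S : T -> Prop) (x0 : T) :
  (forall x, R x x) -> (forall x y z, R x y -> R y z -> R x z) ->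
  (forall C, C <<= S -> chain R C -> (exists c, C c) -> exists m, S m /\ forall c, C c -> R m c) ->
  S x0 -> exists m, S m /\ R m x0 /\ forall y, S y -> R y m -> R m y.
Proof.
  intros Rrefl Rtrans Hbound Sx0.
  pose (P := fun C => (forall c, C c -> S c /\ R c x0) /\ chain R C).
  destruct (zorn_above P (eq x0)) as [M [[MS Mchain] [Mx0 Mmax]]].
  - split; [intros c <-; split; auto|intros a b <- <-; left; auto].
  - intros F _ FP Fchain. split.
    + intros c [A [FA Ac]]. exact (proj1 (FP A FA) c Ac).
    + intros a b [A [FA Aa]] [B [FB Bb]].
      destruct (Fchain A B FA FB) as [AB|BA].
      * exact (proj2 (FP B FB) a b (AB a Aa) Bb).
      * exact (proj2 (FP A FA) a b Aa (BA b Bb)).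
  - destruct (Hbound M) as [m [Sm Hm]]; [intros c Mc; exact (proj1 (MS c Mc))|exact Mchain|eauto|].
    exists m; split; [exact Sm|split; [apply Hm, Mx0; reflexivity|]].
    intros y Sy Rym. apply Hm, (Mmax (fun c => M c \/ c = y)); [|intros c Mc; left; exact Mc|right; reflexivity].
    split.
    + intros c [Mc| ->]; [exact (MS c Mc)|split; [exact Sy|]].
      apply Rtrans with m; [exact Rym|apply Hm, Mx0; reflexivity].
    + intros a b [Ma| ->] [Mb| ->]; auto.
      * right. apply Rtrans with m; [exact Rym|apply Hm, Ma].
      * left. apply Rtrans with m; [exact Rym|apply Hm, Mb].
Qed.

Lemma compact_chain_lower_bound (X : space) (L C : X -> Prop) :
  compact L -> C <<= L -> chain spec_le C -> (exists c, C c) ->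
  exists m, L m /\ forall c, C c -> spec_le m c.
Proof.
  intros HL CL Cchain [c0 Cc0]. apply NNPP; intros Hno.
  (* Otherwise the opens missing some point of [C] cover [L]; a finite subcover misses
     the least of finitely many points of the chain, which lies in [L]. *)
  pose (F := fun W => opn X W /\ exists c, C c /\ ~ W c).
  destruct (HL F) as [l [Hl1 Hl2]].
  - intros W [HW _]; exact HW.
  - intros t Lt. apply NNPP; intros nt. apply Hno. exists t; split; [exact Lt|].
    intros c Cc U HU Ut. apply NNPP; intros nUc. apply nt. exists U; split; [split; eauto|exact Ut].
  - assert (Hmiss : exists c, C c /\ forall W, In W l -> ~ W c).
    { clear Hl2. induction l as [|W l IH]; [exists c0; split; [exact Cc0|intros ? []]|].
      destruct IH as [c1 [Cc1 Hc1]]; [intros W' HW'; apply Hl1; right; exact HW'|].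
      destruct (Hl1 W (or_introl eq_refl)) as [HW [c2 [Cc2 nWc2]]].
      destruct (Cchain c1 c2 Cc1 Cc2) as [H12|H21].
      - exists c1; split; [exact Cc1|]. intros W' [<-|HW'] Wc1; [exact (nWc2 (H12 _ HW Wc1))|exact (Hc1 W' HW' Wc1)].
      - exists c2; split; [exact Cc2|]. intros W' [<-|HW'] Wc2; [exact (nWc2 Wc2)|].
        exact (Hc1 W' HW' (H21 _ (proj1 (Hl1 W' (or_intror HW'))) Wc2)). }
    destruct Hmiss as [c [Cc Hc]]. destruct (Hl2 c (CL c Cc)) as [W [InW Wc]].
    exact (Hc W InW Wc).
Qed.

Lemma compact_minimal_below (X : space) (L : X -> Prop) (x : X) :
  compact L -> L x -> exists m, L m /\ spec_le m x /\ forall y, L y -> spec_le y m -> spec_le m y.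
Proof.
  intros HL Lx. apply exists_minimal_below; [apply spec_refl|apply spec_trans| |exact Lx].
  intros C CL Cchain Cne. exact (compact_chain_lower_bound X L C HL CL Cchain Cne).
Qed.

Lemma closed_chain_upper_bound (X : space) (D C : X -> Prop) :
  well_filtered X -> closed D -> C <<= D -> chain spec_le C -> (exists c, C c) ->
  exists m, D m /\ forall c, C c -> spec_le c m.
Proof.
  intros WF HD CD Cchain [c0 Cc0]. apply NNPP; intros Hno.
  destruct (WF (fun K => exists c, C c /\ K = spec_le c)) with (U := fun y => ~ D y)
    as [K [[c [Cc ->]] Hc]].
  - exists (spec_le c0); eauto.
  - intros K [c [_ ->]]; apply principal_compact_saturated.
  - intros K1 K2 [c1 [Cc1 ->]] [c2 [Cc2 ->]].
    destruct (Cchain c1 c2 Cc1 Cc2) as [H12|H21].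
    + exists (spec_le c2); split; [eauto|]. intros x Hx; split; [eapply spec_trans; eauto|exact Hx].
    + exists (spec_le c1); split; [eauto|]. intros x Hx; split; [exact Hx|eapply spec_trans; eauto].
  - exact HD.
  - intros x Hx Dx. apply Hno. exists x; split; [exact Dx|].
    intros c Cc. apply (Hx (spec_le c)); eauto.
  - exact (Hc c (spec_refl X c) (CD c Cc)).
Qed.

Lemma closed_maximal_above (X : space) (D : X -> Prop) (x : X) :
  well_filtered X -> closed D -> D x ->
  exists m, D m /\ spec_le x m /\ forall y, D y -> spec_le m y -> spec_le y m.
Proof.
  intros WF HD Dx.
  apply (exists_minimal_below (fun a b => spec_le b a)); [apply spec_refl| |intros C CD Cchain Cne|exact Dx].
  - intros a b c Hba Hcb. eapply spec_trans; eauto.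
  - apply (closed_chain_upper_bound X D C WF HD CD); [|exact Cne].
    intros a b Ca Cb. destruct (Cchain a b Ca Cb); auto.
Qed.

Definition reflects_order {X Y : space} (p : X -> Y) : Prop :=
  forall a b, spec_le (p a) (p b) -> spec_le a b.

Definition sierpinski : space.
Proof.
  refine (@Space bool (fun U => U false -> U true) _ _ _).
  - intros _; exact I.
  - intros U V HU HV [Uf Vf]; split; auto.
  - intros F HF [U [FU Uf]]. exists U; split; [exact FU|exact (HF U FU Uf)].
Defined.

Lemma sierpinski_compact (K : sierpinski -> Prop) : compact K.
Proof.
  intros F HF Hcov.
  assert (Hpt : forall b : bool, exists l, (forall U, In U l -> F U) /\
                  (K b -> exists U, In U l /\ U b)).
  { intros b. destruct (classic (K b)) as [Kb|nKb].
    - destruct (Hcov b Kb) as [U [FU Ub]]. exists [U]; split.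
      + intros V [<-|[]]; exact FU.
      + intros _; exists U; split; [left|]; auto.
    - exists nil; split; [intros ? []|intros Kb; contradiction]. }
  destruct (Hpt true) as [l1 [F1 H1]], (Hpt false) as [l2 [F2 H2]].
  exists (l1 ++ l2); split.
  - intros U HU. apply in_app_or in HU. destruct HU; auto.
  - intros [|] Kb; [destruct (H1 Kb) as [U [? ?]]|destruct (H2 Kb) as [U [? ?]]];
      exists U; split; auto; apply in_or_app; auto.
Qed.

Lemma sierpinski_spec (a b : sierpinski) : spec_le a b <-> a = b \/ (a = false /\ b = true).
Proof.
  split.
  - intros H. destruct a, b; auto.
    assert (Ho : opn sierpinski (fun b : bool => b = true)) by (intros _; reflexivity).
    discriminate (H _ Ho eq_refl).
  - intros [<-|[-> ->]]; [apply spec_refl|intros U HU; exact HU].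
Qed.

Lemma sierpinski_stably_compact : stably_compact sierpinski.
Proof.
  split; [|split; [apply sierpinski_compact|split; [|split]]].
  - intros a b Hab Hba. apply sierpinski_spec in Hab, Hba. intuition congruence.
  - intros x U HU Ux. exists U, U; repeat split; [exact HU|apply sierpinski_compact|exact Ux|intros y Uy; exact Uy..].
  - intros K1 K2 _ _; apply sierpinski_compact.
  - intros F [K0 FK0] Fcs Fdir U HU Hcap.
    (* The only compact saturated sets are the three upsets of [bool]: if [F] contains
       [set0] or [{true}] we are done, otherwise all members are full. *)
    destruct (classic (exists K, F K /\ ~ K true)) as [[K [FK nKt]]|Ht].
    { exists K; split; [exact FK|]. intros [|] Kb; [contradiction|].
      exfalso; apply nKt. apply (proj2 (Fcs K FK) false true Kb), sierpinski_spec; auto. }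
    destruct (classic (exists K, F K /\ ~ K false)) as [[K [FK nKf]]|Hf].
    + exists K; split; [exact FK|]. intros [|] Kb; [|contradiction].
      apply Hcap. intros K' FK'. apply NNPP; intros n; apply Ht; eauto.
    + exists K0; split; [exact FK0|]. intros b _. apply Hcap.
      intros K FK. apply NNPP; intros n. destruct b; [apply Ht|apply Hf]; eauto.
Qed.

Definition sierpinski_path {X : space} (x y : X) : sierpinski -> X :=
  fun b => if b then y else x.

Lemma sierpinski_path_perfect (X : space) (x y : X) :
  spec_le x y -> perfect (sierpinski_path x y).
Proof.
  intros Hxy; split.
  - intros U HU Ux. exact (Hxy U HU Ux).
  - intros K [_ HK]. split; [apply sierpinski_compact|].
    intros a b Ka Hab. apply sierpinski_spec in Hab.
    destruct Hab as [<-|[-> ->]]; [exact Ka|exact (HK x y Ka Hxy)].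
Qed.

Section EqualizerPoints.
Variables (E X Y : space) (h : E -> X) (f g : X -> Y).
Hypothesis Heq : is_StComp_equalizer h f g.

(* Perfect maps out of the Sierpinski space are the pairs [x <= y]; factoring them
   through [h] recovers the points and the order of [E]. *)
Lemma equalizer_path (x y : X) :
  spec_le x y -> f x = g x -> f y = g y ->
  exists u : sierpinski -> E, continuous u /\ (forall b, h (u b) = sierpinski_path x y b) /\
    forall u', perfect u' -> (forall b, h (u' b) = sierpinski_path x y b) -> forall b, u' b = u b.
Proof.
  intros Hxy Hx Hy. destruct Heq as [_ [_ Huniv]].
  destruct (Huniv sierpinski sierpinski_stably_compact (sierpinski_path x y)) as [u [[uc _] Hu]].
  - exact (sierpinski_path_perfect X x y Hxy).
  - intros [|]; assumption.
  - exists u; auto.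
Qed.

Lemma equalizer_injective (a b : E) : h a = h b -> a = b.
Proof.
  intros Hab. destruct Heq as [_ [Hfg _]].
  destruct (equalizer_path (h a) (h a) (spec_refl X _) (Hfg a) (Hfg a)) as [u [_ [_ Huniq]]].
  change (sierpinski_path a a true = sierpinski_path b b true).
  rewrite (Huniq (sierpinski_path a a) (sierpinski_path_perfect E a a (spec_refl E a)))
    with (b := true) by (intros [|]; reflexivity).
  rewrite (Huniq (sierpinski_path b b) (sierpinski_path_perfect E b b (spec_refl E b)))
    with (b := true) by (intros [|]; symmetry; exact Hab).
  reflexivity.
Qed.

Lemma equalizer_reflects_order : reflects_order h.
Proof.
  intros a b Hab. destruct Heq as [_ [Hfg _]].
  destruct (equalizer_path (h a) (h b) Hab (Hfg a) (Hfg b)) as [u [uc [Hu _]]].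
  rewrite <- (equalizer_injective (u false) a (Hu false)), <- (equalizer_injective (u true) b (Hu true)).
  apply continuous_spec; [exact uc|apply sierpinski_spec; auto].
Qed.

Lemma equalizer_image (x : X) : f x = g x -> exists e, h e = x.
Proof.
  intros Hx. destruct (equalizer_path x x (spec_refl X x) Hx Hx) as [u [_ [Hu _]]].
  exists (u true); exact (Hu true).
Qed.

End EqualizerPoints.

Lemma locally_compact_spec (X : space) (x y : X) :
  locally_compact X ->
  (forall V K, opn X V -> compact K -> V x -> V <<= K -> up K y) -> spec_le x y.
Proof.
  intros LC Hy W HW Wx.
  destruct (LC x W HW Wx) as [V [K [HV [HK [Vx [VK KW]]]]]].
  destruct (Hy V K HV HK Vx VK) as [z [Kz Hzy]]. exact (Hzy W HW (KW z Kz)).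
Qed.

Lemma closed_down_image {E X : space} (h : E -> X) (F : E -> Prop) :
  well_filtered E -> locally_compact X -> perfect h -> closed F -> closed (down (img h F)).
Proof.
  intros WF LC [hc hp] HF. apply opn_of_nbhds. intros x nx.
  (* The preimages of the compact neighbourhoods of [x] form a filtered family of compact
     saturated sets whose intersection misses [F]; well-filteredness gives one inside [~ F]. *)
  pose (Fam := fun Q : E -> Prop => exists V K, opn X V /\ compact K /\ V x /\ V <<= K /\
                                              Q = (fun e => up K (h e))).
  destruct (WF Fam) with (U := fun e => ~ F e) as [Q [[V [K [HV [HK [Vx [VK ->]]]]]] HQ]].
  - destruct (LC x (fun _ => True) (opn_full X) I) as [V [K [HV [HK [Vx [VK _]]]]]].
    exists (fun e => up K (h e)), V, K; auto.
  - intros Q [V [K [_ [HK [_ [_ ->]]]]]]. apply hp, up_compact_saturated, HK.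
  - intros Q1 Q2 [V1 [K1 [HV1 [_ [Vx1 [VK1 ->]]]]]] [V2 [K2 [HV2 [_ [Vx2 [VK2 ->]]]]]].
    destruct (LC x (fun y => V1 y /\ V2 y) (opn_inter X _ _ HV1 HV2) (conj Vx1 Vx2))
      as [V3 [K3 [HV3 [HK3 [Vx3 [VK3 K3V]]]]]].
    exists (fun e => up K3 (h e)); split; [exists V3, K3; auto|].
    intros e [z [K3z Hz]]. destruct (K3V z K3z) as [V1z V2z].
    split; exists z; auto.
  - exact HF.
  - intros e He Fe. apply nx. exists (h e); split; [exists e; auto|].
    apply (locally_compact_spec X x (h e) LC). intros V K HV HK Vx VK.
    apply (He (fun e => up K (h e))). exists V, K; auto.
  - exists V; split; [exact HV|split; [exact Vx|]].
    intros y Vy [z [[e [Fe <-]] Hyz]]. apply (HQ e); [|exact Fe].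
    exists y; split; [exact (VK y Vy)|exact Hyz].
Qed.

(* The largest upper set of [X] whose trace along [h] lies in [U]. *)
Definition open_hull {E X : space} (h : E -> X) (U : E -> Prop) : X -> Prop :=
  fun x => ~ down (img h (fun e => ~ U e)) x.

Lemma open_hull_open {E X : space} (h : E -> X) (U : E -> Prop) :
  well_filtered E -> locally_compact X -> perfect h -> opn E U -> opn X (open_hull h U).
Proof.
  intros WF LC hp HU. apply (closed_down_image h); auto.
  apply closed_compl_open, HU.
Qed.

Lemma open_hull_trace {E X : space} (h : E -> X) (U : E -> Prop) (e : E) :
  reflects_order h -> opn E U -> (open_hull h U (h e) <-> U e).
Proof.
  intros hr HU; split.
  - intros H. apply NNPP; intros nUe. apply H. apply down_img, nUe.
  - intros Ue [y [[e' [nUe' <-]] Hle]]. exact (nUe' (hr _ _ Hle U HU Ue)).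
Qed.

Lemma gen_top_sub {T : Type} (B : (T -> Prop) -> Prop) (S : T -> Prop) : B S -> gen_top B S.
Proof. intros BS O _ _ _ HB; exact (HB S BS). Qed.

Lemma continuous_into_gen (Z : space) (T : Type) (B : (T -> Prop) -> Prop) (p : Z -> T) :
  (forall S, B S -> opn Z (fun z => S (p z))) -> @continuous Z (gen_space T B) p.
Proof.
  intros Hsub V HV. apply (HV (fun W => opn Z (fun z => W (p z)))).
  - apply opn_full.
  - intros U W HU HW; exact (opn_inter Z _ _ HU HW).
  - intros F HF.
    apply opn_ext with (fun z => exists W, (exists U, F U /\ W = (fun z => U (p z))) /\ W z).
    + apply opn_union. intros W [U [FU ->]]; exact (HF U FU).
    + intros z; split.
      * intros [W [[U [FU ->]] Wz]]; eauto.
      * intros [U [FU Uz]]. exists (fun z => U (p z)); eauto.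
  - exact Hsub.
Qed.

Lemma gen_top_basic_nbhd {T : Type} (B : (T -> Prop) -> Prop) (W : T -> Prop) :
  gen_top B W -> forall t, W t -> exists l, (forall S, In S l -> B S) /\
    (forall S, In S l -> S t) /\ (fun t' => forall S, In S l -> S t') <<= W.
Proof.
  intros HW. apply HW; clear W HW.
  - intros t _. exists nil; repeat split; intros ? [].
  - intros U V HU HV t [Ut Vt].
    destruct (HU t Ut) as [l1 [B1 [T1 W1]]], (HV t Vt) as [l2 [B2 [T2 W2]]].
    exists (l1 ++ l2); split; [|split].
    + intros S HS; apply in_app_or in HS; destruct HS as [HS|HS]; [exact (B1 S HS)|exact (B2 S HS)].
    + intros S HS; apply in_app_or in HS; destruct HS as [HS|HS]; [exact (T1 S HS)|exact (T2 S HS)].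
    + intros x Hx; split; [apply W1|apply W2]; intros S HS; apply Hx, in_or_app; auto.
  - intros F HF t [U [FU Ut]]. destruct (HF U FU t Ut) as [l [Bl [Tl Wl]]].
    exists l; repeat split; auto. intros t' Ht'. exists U; split; [exact FU|exact (Wl t' Ht')].
  - intros S BS t St. exists [S]; repeat split.
    + intros S' [<-|[]]; exact BS.
    + intros S' [<-|[]]; exact St.
    + intros t' Ht'. apply Ht'; left; reflexivity.
Qed.

Lemma list_restrict {A : Type} (P : A -> Prop) (l : list A) :
  exists l', (forall x, In x l' -> P x) /\ (forall x, In x l -> P x -> In x l').
Proof.
  induction l as [|a l [l' [H1 H2]]]; [exists nil; split; intros ? []|].
  destruct (classic (P a)) as [Pa|nPa].
  - exists (a :: l'); split; [intros x [<-|Hx]; auto|intros x [<-|Hx] Px; [left|right]; auto].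
  - exists l'; split; [exact H1|intros x [<-|Hx] Px; [contradiction|auto]].
Qed.

Lemma chain_list_member {A : Type} (G : (A -> Prop) -> Prop) (l : list A) :
  (exists M, G M) -> chain (fun M N => M <<= N) G ->
  (forall x, In x l -> exists M, G M /\ M x) -> exists M, G M /\ forall x, In x l -> M x.
Proof.
  intros [M0 GM0] Gchain. induction l as [|x l IH]; intros Hl; [exists M0; split; [exact GM0|intros ? []]|].
  destruct IH as [M1 [GM1 HM1]]; [intros y Hy; apply Hl; right; exact Hy|].
  destruct (Hl x (or_introl eq_refl)) as [M2 [GM2 M2x]].
  destruct (Gchain M1 M2 GM1 GM2) as [H12|H21].
  - exists M2; split; [exact GM2|]. intros y [<-|Hy]; [exact M2x|exact (H12 y (HM1 y Hy))].
  - exists M1; split; [exact GM1|]. intros y [<-|Hy]; [exact (H21 x M2x)|exact (HM1 y Hy)].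
Qed.

Definition finite_subcover {T : Type} (K : T -> Prop) (F : (T -> Prop) -> Prop) : Prop :=
  exists l : list (T -> Prop), (forall U, In U l -> F U) /\ forall t, K t -> exists U, In U l /\ U t.

Lemma finite_subcover_meet {T : Type} (K : T -> Prop) (M : (T -> Prop) -> Prop) (l : list (T -> Prop)) :
  (forall S, In S l -> exists lS, (forall W, In W lS -> M W) /\
     forall t, K t -> S t \/ exists W, In W lS /\ W t) ->
  exists L, (forall W, In W L -> M W) /\
    forall t, K t -> (forall S, In S l -> S t) \/ exists W, In W L /\ W t.
Proof.
  induction l as [|S l IH]; intros Hl; [exists nil; split; [intros ? []|left; intros ? []]|].
  destruct (Hl S (or_introl eq_refl)) as [lS [MlS HlS]].
  destruct IH as [L [ML HL]]; [intros S' HS'; apply Hl; right; exact HS'|].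
  exists (lS ++ L); split; [intros W HW; apply in_app_or in HW; destruct HW; auto|].
  intros t Kt. destruct (HlS t Kt) as [St|[W [InW Wt]]].
  - destruct (HL t Kt) as [Hall|[W [InW Wt]]].
    + left. intros S' [<-|HS']; [exact St|exact (Hall S' HS')].
    + right. exists W; split; [apply in_or_app; auto|exact Wt].
  - right. exists W; split; [apply in_or_app; auto|exact Wt].
Qed.

Section MaximalUncoveredFamily.
Variables (T : Type) (B : (T -> Prop) -> Prop) (K : T -> Prop) (M : (T -> Prop) -> Prop).
Hypotheses (Mopen : M <<= gen_top B) (Mnofin : ~ finite_subcover K M).
Hypothesis Mmax : forall N, N <<= gen_top B -> ~ finite_subcover K N -> M <<= N -> N <<= M.

Lemma maximal_uncovered_add (S : T -> Prop) :
  gen_top B S -> ~ M S ->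
  exists lS, (forall W, In W lS -> M W) /\ forall t, K t -> S t \/ exists W, In W lS /\ W t.
Proof.
  intros HS nMS.
  destruct (classic (finite_subcover K (fun W => M W \/ W = S))) as [[l [Hl Hcov]]|nfin].
  - destruct (list_restrict M l) as [lS [HlS1 HlS2]]. exists lS; split; [exact HlS1|].
    intros t Kt. destruct (Hcov t Kt) as [W [InW Wt]].
    destruct (Hl W InW) as [MW| ->]; [right; exists W; auto|left; exact Wt].
  - exfalso. apply nMS, (Mmax (fun W => M W \/ W = S)); [| |intros W MW; left; exact MW|right; reflexivity].
    + intros W [MW| ->]; [exact (Mopen W MW)|exact HS].
    + exact nfin.
Qed.

(* If no subbasic [S] in a basic neighbourhood [/\ l] of [t] were in [M], then adding each
   of them to [M] gives finite subcovers, which combine with [S0 >= /\ l] into one of [M]. *)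
Lemma maximal_uncovered_subbasic (t : T) (S0 : T -> Prop) :
  K t -> M S0 -> S0 t -> exists S, (B S /\ M S) /\ S t.
Proof.
  intros Kt MS0 S0t.
  destruct (gen_top_basic_nbhd B S0 (Mopen S0 MS0) t S0t) as [l [Bl [lt lS0]]].
  destruct (classic (exists S, In S l /\ M S)) as [[S [InS MS]]|nS];
    [exists S; split; [split; [exact (Bl S InS)|exact MS]|exact (lt S InS)]|].
  exfalso.
  destruct (finite_subcover_meet K M l) as [L [ML HL]].
  { intros S InS. apply maximal_uncovered_add; [exact (gen_top_sub B S (Bl S InS))|].
    intros MS; apply nS; exists S; auto. }
  apply Mnofin. exists (S0 :: L); split; [intros W [<-|InW]; auto|].
  intros t' Kt'. destruct (HL t' Kt') as [Hl|[W [InW Wt']]].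
  - exists S0; split; [left; reflexivity|exact (lS0 t' Hl)].
  - exists W; split; [right; exact InW|exact Wt'].
Qed.

End MaximalUncoveredFamily.

Lemma alexander_subbase {T : Type} (B : (T -> Prop) -> Prop) (K : T -> Prop) :
  (forall F, F <<= B -> (forall t, K t -> exists S, F S /\ S t) -> finite_subcover K F) ->
  @compact (gen_space T B) K.
Proof.
  intros HB Fm Fopen Fcov. apply NNPP; intros Hno.
  destruct (zorn_above (fun M => M <<= gen_top B /\ ~ finite_subcover K M) Fm)
    as [M [[Mopen Mnofin] [FmM Mmax]]].
  - split; [exact Fopen|exact Hno].
  - intros G Gne GP Gchain. split; [intros W [A [GA AW]]; exact (proj1 (GP A GA) W AW)|].
    intros [l [Hl Hcov]]. destruct (chain_list_member G l Gne Gchain Hl) as [A [GA HA]].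
    apply (proj2 (GP A GA)). exists l; split; assumption.
  - apply Mnofin.
    destruct (HB (fun S => B S /\ M S)) as [l [Hl Hcov]];
      [intros S [BS _]; exact BS| |exists l; split; [intros U HU; exact (proj2 (Hl U HU))|exact Hcov]].
    intros t Kt. destruct (Fcov t Kt) as [S0 [FmS0 S0t]].
    refine (maximal_uncovered_subbasic T B K M Mopen Mnofin _ t S0 Kt (FmM S0 FmS0) S0t).
    intros N Nopen Nnofin MN. exact (Mmax N (conj Nopen Nnofin) MN).
Qed.

Lemma not_below_open (X : space) (x : X) : opn X (fun y => ~ spec_le y x).
Proof.
  apply opn_of_nbhds. intros y nyx.
  destruct (not_all_ex_not _ _ nyx) as [U HU].
  destruct (imply_to_and _ _ HU) as [HUo HU'].
  destruct (imply_to_and _ _ HU') as [Uy nUx].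
  exists U; split; [exact HUo|split; [exact Uy|]]. intros z Uz Hzx. exact (nUx (Hzx U HUo Uz)).
Qed.

Lemma Box_open (X : space) (U : X -> Prop) : opn X U -> opn (UpV X) (Box U).
Proof. intros HU. apply gen_top_sub. exists U; auto. Qed.

Lemma Diamond_open (X : space) (U : X -> Prop) : opn X U -> opn (LoV X) (Diamond U).
Proof. intros HU. apply gen_top_sub. exists U; auto. Qed.

Lemma UpV_spec (X : space) (K K' : UpV X) :
  spec_le K K' <-> proj1_sig K' <<= proj1_sig K.
Proof.
  split.
  - intros HKK' x K'x. apply NNPP; intros nKx.
    assert (HK : Box (fun y => ~ spec_le y x) K).
    { intros y Ky Hyx. exact (nKx (proj2 (proj2_sig K) y x Ky Hyx)). }
    exact (HKK' _ (Box_open X _ (not_below_open X x)) HK x K'x (spec_refl X x)).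
  - intros Hsub W HW. apply HW; clear W HW.
    + intros _; exact I.
    + intros U V HU HV [UK VK]; split; auto.
    + intros F HF [U [FU UK]]. exists U; split; [exact FU|exact (HF U FU UK)].
    + intros S [U [HU ->]] HK x K'x. exact (HK x (Hsub x K'x)).
Qed.

Lemma LoV_spec (X : space) (C C' : LoV X) :
  spec_le C C' <-> proj1_sig C <<= proj1_sig C'.
Proof.
  split.
  - intros HCC' x Cx. apply NNPP; intros nC'x.
    destruct (HCC' _ (Diamond_open X _ (proj2_sig C')) (ex_intro _ x (conj Cx nC'x)))
      as [y [C'y nC'y]].
    exact (nC'y C'y).
  - intros Hsub W HW. apply HW; clear W HW.
    + intros _; exact I.
    + intros U V HU HV [UC VC]; split; auto.
    + intros F HF [U [FU UC]]. exists U; split; [exact FU|exact (HF U FU UC)].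
    + intros S [U [HU ->]] [x [Cx Ux]]. exists x; split; [exact (Hsub x Cx)|exact Ux].
Qed.

Lemma UpV_T0 (X : space) : T0 (UpV X).
Proof.
  intros K K' HKK' HK'K. apply sig_eq, set_eq. intros x.
  split; [apply (proj1 (UpV_spec X K' K) HK'K)|apply (proj1 (UpV_spec X K K') HKK')].
Qed.

Lemma LoV_T0 (X : space) : T0 (LoV X).
Proof.
  intros C C' HCC' HC'C. apply sig_eq, set_eq. intros x.
  split; [apply (proj1 (LoV_spec X C C') HCC')|apply (proj1 (LoV_spec X C' C) HC'C)].
Qed.

Lemma UpV_map_val {X Y : space} (p : X -> Y) (K : UpV X) :
  continuous p -> proj1_sig (UpV_map p K) = up (img p (proj1_sig K)).
Proof.
  intros Hp. unfold UpV_map. destruct excluded_middle_informative as [?|n]; [reflexivity|].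
  exfalso; apply n, up_compact_saturated, compact_image; [exact Hp|exact (proj1 (proj2_sig K))].
Qed.

Lemma LoV_map_val {X Y : space} (p : X -> Y) (C : LoV X) :
  well_filtered X -> locally_compact Y -> perfect p ->
  proj1_sig (LoV_map p C) = down (img p (proj1_sig C)).
Proof.
  intros WF LC Hp. unfold LoV_map. destruct excluded_middle_informative as [?|n]; [reflexivity|].
  exfalso; apply n, closed_down_image; [exact WF|exact LC|exact Hp|exact (proj2_sig C)].
Qed.

Lemma UpV_map_continuous {X Y : space} (p : X -> Y) : continuous p -> continuous (UpV_map p).
Proof.
  intros Hp. apply continuous_into_gen. intros S [U [HU ->]].
  apply opn_ext with (Box (fun x => U (p x))); [apply Box_open, Hp, HU|].
  intros K. unfold Box. rewrite UpV_map_val by exact Hp. split.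
  - intros H y [z [[x [Kx <-]] Hzy]]. exact (Hzy U HU (H x Kx)).
  - intros H x Kx. apply H, up_img, Kx.
Qed.

Lemma LoV_map_continuous {X Y : space} (p : X -> Y) :
  well_filtered X -> locally_compact Y -> perfect p -> continuous (LoV_map p).
Proof.
  intros WF LC Hp. apply continuous_into_gen. intros S [U [HU ->]].
  apply opn_ext with (Diamond (fun x => U (p x))); [apply Diamond_open, (proj1 Hp), HU|].
  intros C. unfold Diamond. rewrite LoV_map_val by assumption. split.
  - intros [x [Cx Ux]]. exists (p x); split; [apply down_img, Cx|exact Ux].
  - intros [y [[z [[x [Cx <-]] Hyz]] Uy]]. exists x; split; [exact Cx|exact (Hyz U HU Uy)].
Qed.

Lemma UpV_map_comp {X Y Z : space} (p : Y -> Z) (q : X -> Y) (K : UpV X) :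
  continuous p -> continuous q -> UpV_map p (UpV_map q K) = UpV_map (fun x => p (q x)) K.
Proof.
  intros Hp Hq. apply sig_eq.
  rewrite !UpV_map_val by (auto using continuous_comp).
  apply set_eq. intros z; split.
  - intros [z' [[y [[y' [[x [Kx <-]] Hxy]] <-]] Hz]].
    exists (p (q x)); split; [exists x; auto|].
    exact (spec_trans Z _ _ _ (continuous_spec p _ _ Hp Hxy) Hz).
  - intros [z' [[x [Kx <-]] Hz]]. exists (p (q x)); split; [|exact Hz].
    exists (q x); split; [apply up_img, Kx|reflexivity].
Qed.

Lemma perfect_comp {X Y Z : space} (p : Y -> Z) (q : X -> Y) :
  perfect p -> perfect q -> perfect (fun x => p (q x)).
Proof.
  intros [pc pp] [qc qp]. split; [exact (continuous_comp p q pc qc)|].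
  intros K HK. exact (qp _ (pp K HK)).
Qed.

Lemma LoV_map_comp {X Y Z : space} (p : Y -> Z) (q : X -> Y) (C : LoV X) :
  well_filtered X -> well_filtered Y -> locally_compact Y -> locally_compact Z ->
  perfect p -> perfect q -> LoV_map p (LoV_map q C) = LoV_map (fun x => p (q x)) C.
Proof.
  intros WFX WFY LCY LCZ Hp Hq. apply sig_eq.
  rewrite !LoV_map_val by (auto using perfect_comp).
  apply set_eq. intros z; split.
  - intros [z' [[y [[y' [[x [Cx <-]] Hyx]] <-]] Hz]].
    exists (p (q x)); split; [exists x; auto|].
    exact (spec_trans Z _ _ _ Hz (continuous_spec p _ _ (proj1 Hp) Hyx)).
  - intros [z' [[x [Cx <-]] Hz]]. exists (p (q x)); split; [|exact Hz].
    exists (q x); split; [apply down_img, Cx|reflexivity].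
Qed.

Lemma UpV_map_reflects_order {X Y : space} (p : X -> Y) :
  continuous p -> reflects_order p -> reflects_order (UpV_map p).
Proof.
  intros Hp pr K K' HKK'. apply UpV_spec.
  pose proof (proj1 (UpV_spec Y _ _) HKK') as Hsub. rewrite !UpV_map_val in Hsub by exact Hp.
  intros x K'x. destruct (Hsub (p x) (up_img p _ x K'x)) as [y [[x' [Kx' <-]] Hle]].
  exact (proj2 (proj2_sig K) x' x Kx' (pr _ _ Hle)).
Qed.

Lemma LoV_map_reflects_order {X Y : space} (p : X -> Y) :
  well_filtered X -> locally_compact Y -> perfect p -> reflects_order p ->
  reflects_order (LoV_map p).
Proof.
  intros WF LC Hp pr C C' HCC'. apply LoV_spec.
  pose proof (proj1 (LoV_spec Y _ _) HCC') as Hsub. rewrite !LoV_map_val in Hsub by assumption.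
  intros x Cx. destruct (Hsub (p x) (down_img p _ x Cx)) as [y [[x' [C'x' <-]] Hle]].
  exact (closed_spec X _ x x' (proj2_sig C') C'x' (pr _ _ Hle)).
Qed.

Definition UpV_preimage {E X : space} (h : E -> X) (hp : perfect h) (L : UpV X) : UpV E :=
  exist _ (fun e => proj1_sig L (h e)) (proj2 hp _ (proj2_sig L)).

Definition LoV_preimage {E X : space} (h : E -> X) (hc : continuous h) (C : LoV X) : LoV E :=
  exist _ (fun e => proj1_sig C (h e)) (hc _ (proj2_sig C)).

Lemma UpV_preimage_continuous {E X : space} (h : E -> X) (hp : perfect h) :
  well_filtered E -> locally_compact X -> continuous (UpV_preimage h hp).
Proof.
  intros WF LC. apply continuous_into_gen. intros S [U [HU ->]].
  apply opn_ext with (Box (open_hull h U)); [apply Box_open, open_hull_open; assumption|].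
  intros L. unfold Box; simpl. split.
  - intros H e Le. apply NNPP; intros nUe. exact (H (h e) Le (down_img h _ e nUe)).
  - intros H x Lx [y [[e [nUe <-]] Hle]]. exact (nUe (H e (proj2 (proj2_sig L) x (h e) Lx Hle))).
Qed.

Lemma UpV_map_perfect {E X : space} (h : E -> X) :
  well_filtered E -> locally_compact X -> perfect h -> perfect (UpV_map h).
Proof.
  intros WF LC hp. assert (Vhc := UpV_map_continuous h (proj1 hp)). split; [exact Vhc|].
  intros Q [Qc Qs]. split; [|apply continuous_saturated; assumption].
  (* [UpV_map h] is left adjoint to [UpV_preimage h], so the preimage of [Q] is the
     upset of its image under the continuous map [UpV_preimage h]. *)
  apply compact_ext with (up (img (UpV_preimage h hp) Q)).
  - apply compact_up, compact_image; [apply UpV_preimage_continuous; assumption|exact Qc].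
  - intros K. split.
    + intros [K0 [[L [QL <-]] Hle]]. apply (Qs L _ QL). apply UpV_spec.
      rewrite UpV_map_val by exact (proj1 hp).
      intros x [y [[e [Ke <-]] Hxy]]. apply (proj2 (proj2_sig L) (h e) x); [|exact Hxy].
      exact (proj1 (UpV_spec E _ _) Hle e Ke).
    + intros QK. exists (UpV_preimage h hp (UpV_map h K)); split; [exists (UpV_map h K); auto|].
      apply UpV_spec. intros e Ke. simpl. rewrite UpV_map_val by exact (proj1 hp).
      apply up_img, Ke.
Qed.

Lemma UpV_map_preimage {E X : space} (h : E -> X) (hp : perfect h) (L : UpV X) :
  (forall x, proj1_sig L x -> exists e, proj1_sig L (h e) /\ spec_le (h e) x) ->
  UpV_map h (UpV_preimage h hp L) = L.
Proof.
  intros HL. apply sig_eq. rewrite UpV_map_val by exact (proj1 hp).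
  apply set_eq. intros x; split.
  - intros [y [[e [Le <-]] Hle]]. exact (proj2 (proj2_sig L) _ _ Le Hle).
  - intros Lx. destruct (HL x Lx) as [e [Le Hle]]. exists (h e); split; [exists e; auto|exact Hle].
Qed.

Lemma LoV_map_preimage {E X : space} (h : E -> X) (hp : perfect h) (C : LoV X) :
  well_filtered E -> locally_compact X ->
  (forall x, proj1_sig C x -> exists e, proj1_sig C (h e) /\ spec_le x (h e)) ->
  LoV_map h (LoV_preimage h (proj1 hp) C) = C.
Proof.
  intros WF LC HC. apply sig_eq. rewrite LoV_map_val by assumption.
  apply set_eq. intros x; split.
  - intros [y [[e [Ce <-]] Hle]]. exact (closed_spec X _ x (h e) (proj2_sig C) Ce Hle).
  - intros Cx. destruct (HC x Cx) as [e [Ce Hle]]. exists (h e); split; [exists e; auto|exact Hle].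
Qed.

Lemma LoV_preimage_continuous {Z E X : space} (h : E -> X) (hc : continuous h) (m : Z -> LoV X) :
  continuous m ->
  (forall U, opn E U -> exists U', opn X U' /\ forall e, U e <-> U' (h e)) ->
  (forall z x, proj1_sig (m z) x -> exists e, proj1_sig (m z) (h e) /\ spec_le x (h e)) ->
  continuous (fun z => LoV_preimage h hc (m z)).
Proof.
  intros mc hemb Hm. apply continuous_into_gen. intros S [U [HU ->]].
  destruct (hemb U HU) as [U' [HU' HUU']].
  apply opn_ext with (fun z => Diamond U' (m z)); [apply mc, Diamond_open, HU'|].
  intros z; split.
  - intros [x [mx U'x]]. destruct (Hm z x mx) as [e [me Hle]].
    exists e; split; [exact me|]. apply HUU'. exact (Hle U' HU' U'x).
  - intros [e [me Ue]]. exists (h e); split; [exact me|apply HUU', Ue].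
Qed.

Lemma open_hull_mono {E X : space} (h : E -> X) (U V : E -> Prop) :
  U <<= V -> open_hull h U <<= open_hull h V.
Proof.
  intros UV x HU [y [[e [nVe <-]] Hle]]. apply HU.
  exists (h e); split; [exists e; split; [intros Ue; exact (nVe (UV e Ue))|reflexivity]|exact Hle].
Qed.

Lemma open_hull_union_finite {E X : space} (h : E -> X) (F : (E -> Prop) -> Prop) (x : X) :
  perfect h -> F <<= opn E -> open_hull h (union_of F) x ->
  exists l, open_hull h (union_of (fun U => In U l /\ F U)) x.
Proof.
  intros hp Fopen Hx.
  destruct (proj1 (proj2 hp _ (principal_compact_saturated X x)) F) as [l [Hl1 Hl2]].
  - exact Fopen.
  - intros e Hxe. apply NNPP; intros ne. apply Hx.
    exists (h e); split; [exists e; split; [exact ne|reflexivity]|exact Hxe].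
  - exists l. intros [y [[e [ne <-]] Hle]]. apply ne.
    destruct (Hl2 e Hle) as [U [InU Ue]].
    exists U; split; [split; [exact InU|exact (Hl1 U InU)]|exact Ue].
Qed.

Lemma LoV_map_perfect {E X : space} (h : E -> X) :
  well_filtered E -> locally_compact X -> perfect h -> perfect (LoV_map h).
Proof.
  intros WF LC hp. assert (Vhc := LoV_map_continuous h WF LC hp). split; [exact Vhc|].
  intros Q [Qc Qs]. split; [|apply continuous_saturated; assumption].
  apply alexander_subbase. intros Fm FmB Fcov.
  pose (F := fun U => opn E U /\ Fm (Diamond U)).
  assert (Fopen : F <<= opn E) by (intros U [HU _]; exact HU).
  pose (W := fun l => Diamond (open_hull h (union_of (fun U => In U l /\ F U)))).
  assert (Wmono : forall l l', (forall U, In U l -> In U l') -> W l <<= W l').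
  { intros l l' Hll' D [x [Dx Hx]]. exists x; split; [exact Dx|].
    revert Hx; apply open_hull_mono. intros e [U [[InU FU] Ue]]. exists U; auto. }
  (* [Q] does not contain [LoV_map h] of the complement of [union_of F], as that set
     meets no member of the cover. *)
  assert (Wcover : forall D, Q D -> exists l, W l D).
  { intros D QD.
    destruct (classic (exists x, proj1_sig D x /\ open_hull h (union_of F) x)) as [[x [Dx Hx]]|nD].
    - destruct (open_hull_union_finite h F x hp Fopen Hx) as [l Hl]. exists l, x; auto.
    - exfalso. assert (HC0 : closed (fun e => ~ union_of F e)).
      { apply closed_compl_open, opn_union, Fopen. }
      destruct (Fcov (exist _ _ HC0)) as [S [FmS SC0]].
      + apply (Qs D _ QD), LoV_spec. rewrite LoV_map_val by assumption.
        intros x Dx. apply NNPP; intros nx. apply nD. exists x; auto.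
      + destruct (FmB S FmS) as [U [HU ->]]. destruct SC0 as [e [nU Ue]].
        apply nU. exists U; split; [split; assumption|exact Ue]. }
  destruct (compact_directed_cover Q W nil Qc) as [ls Hls]; [| |exact Wcover|].
  - intros l. apply Diamond_open, open_hull_open, opn_union; try assumption.
    intros U [_ FU]; exact (Fopen U FU).
  - intros l1 l2. exists (l1 ++ l2); split; apply Wmono; intros U HU; apply in_or_app; auto.
  - destruct (list_restrict F ls) as [ls' [Fls' Hls']].
    exists (map Diamond ls'); split.
    + intros S HS. apply in_map_iff in HS. destruct HS as [U [<- InU]]. exact (proj2 (Fls' U InU)).
    + intros C QC. destruct (Hls _ QC) as [x [Cx Hx]].
      rewrite LoV_map_val in Cx by assumption. destruct Cx as [y [[c [Cc <-]] Hxc]].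
      destruct (classic (union_of (fun U => In U ls /\ F U) c)) as [[U [[InU FU] Uc]]|nc].
      * exists (Diamond U); split; [apply in_map, Hls'; assumption|exists c; auto].
      * exfalso; apply Hx. exists (h c); split; [exists c; split; [exact nc|reflexivity]|exact Hxc].
Qed.

Lemma perfect_lift {Z A B : space} (m : Z -> B) (p : A -> B) (u : Z -> A) :
  perfect m -> continuous p -> continuous u -> reflects_order p ->
  (forall z, p (u z) = m z) -> perfect u.
Proof.
  intros [mc mp] pc uc pr Hpu. split; [exact uc|].
  intros P [Pc Ps]. split; [|apply continuous_saturated; assumption].
  apply compact_ext with (fun z => up (img p P) (m z)).
  - apply mp, up_compact_saturated, compact_image; assumption.
  - intros z; split.
    + intros [b [[a [Pa <-]] Hle]]. rewrite <- Hpu in Hle. exact (Ps a (u z) Pa (pr _ _ Hle)).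
    + intros Pu. rewrite <- Hpu. apply up_img, Pu.
Qed.

Lemma equalizer_of_lifts {E X Y : space} (h : E -> X) (f g : X -> Y) :
  T0 E -> perfect h -> (forall e, f (h e) = g (h e)) -> reflects_order h ->
  (forall (Z : space) (m : Z -> X), perfect m -> (forall z, f (m z) = g (m z)) ->
     exists u : Z -> E, continuous u /\ forall z, h (u z) = m z) ->
  is_StComp_equalizer h f g.
Proof.
  intros T0E hp hfg hr Hlift. split; [exact hp|split; [exact hfg|]].
  intros Z _ m mp Hm. destruct (Hlift Z m mp Hm) as [u [uc Hu]].
  exists u; split; [exact (perfect_lift m h u mp (proj1 hp) uc hr Hu)|split; [exact Hu|]].
  intros u' _ Hu' z. apply T0E; apply hr; rewrite Hu, Hu'; apply spec_refl.
Qed.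

Lemma retraction_minimal_le {X Y : space} (p q : X -> Y) (k : Y -> X) (S : X -> Prop) (m : X) :
  continuous q -> continuous k -> (forall x, k (p x) = x) -> (forall x, k (q x) = x) ->
  S m -> (forall y, S y -> spec_le y m -> spec_le m y) ->
  up (img p S) <<= up (img q S) -> spec_le (q m) (p m).
Proof.
  intros qc kc kp kq Sm mmin Hsub.
  destruct (Hsub (p m) (up_img p S m Sm)) as [y' [[y [Sy <-]] Hle]].
  assert (Hym : spec_le y m) by (rewrite <- (kq y), <- (kp m); apply continuous_spec; assumption).
  exact (spec_trans Y _ _ _ (continuous_spec q _ _ qc (mmin y Sy Hym)) Hle).
Qed.

Lemma retraction_maximal_le {X Y : space} (p q : X -> Y) (k : Y -> X) (S : X -> Prop) (m : X) :
  continuous q -> continuous k -> (forall x, k (p x) = x) -> (forall x, k (q x) = x) ->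
  S m -> (forall y, S y -> spec_le m y -> spec_le y m) ->
  down (img p S) <<= down (img q S) -> spec_le (p m) (q m).
Proof.
  intros qc kc kp kq Sm mmax Hsub.
  destruct (Hsub (p m) (down_img p S m Sm)) as [y' [[y [Sy <-]] Hle]].
  assert (Hmy : spec_le m y) by (rewrite <- (kq y), <- (kp m); apply continuous_spec; assumption).
  exact (spec_trans Y _ _ _ Hle (continuous_spec q _ _ qc (mmax y Sy Hmy))).
Qed.

Section CoreflexivePair.
Variables (X Y : space) (f g : X -> Y) (k : Y -> X).
Hypotheses (T0Y : T0 Y) (fc : continuous f) (gc : continuous g) (kc : continuous k).
Hypotheses (kf : forall x, k (f x) = x) (kg : forall x, k (g x) = x).

Lemma compact_equalized_below (L : X -> Prop) :
  compact L -> up (img f L) = up (img g L) ->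
  forall x, L x -> exists m, L m /\ f m = g m /\ spec_le m x.
Proof.
  intros HL Hfg x Lx.
  destruct (compact_minimal_below X L x HL Lx) as [m [Lm [mx mmin]]].
  exists m; split; [exact Lm|split; [|exact mx]].
  apply T0Y.
  - apply (retraction_minimal_le g f k L m); auto. rewrite Hfg; auto.
  - apply (retraction_minimal_le f g k L m); auto. rewrite Hfg; auto.
Qed.

Lemma closed_equalized_above (D : X -> Prop) :
  well_filtered X -> closed D -> down (img f D) = down (img g D) ->
  forall x, D x -> exists m, D m /\ f m = g m /\ spec_le x m.
Proof.
  intros WF HD Hfg x Dx.
  destruct (closed_maximal_above X D x WF HD Dx) as [m [Dm [xm mmax]]].
  exists m; split; [exact Dm|split; [|exact xm]].
  apply T0Y.
  - apply (retraction_maximal_le f g k D m); auto. rewrite Hfg; auto.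
  - apply (retraction_maximal_le g f k D m); auto. rewrite Hfg; auto.
Qed.

End CoreflexivePair.

Lemma UpV_preserves_equalizer {E X Y : space} (f g : X -> Y) (k : Y -> X) (h : E -> X) :
  well_filtered E -> locally_compact X -> T0 Y ->
  continuous f -> continuous g -> continuous k ->
  (forall x, k (f x) = x) -> (forall x, k (g x) = x) ->
  is_StComp_equalizer h f g ->
  is_StComp_equalizer (UpV_map h) (UpV_map f) (UpV_map g).
Proof.
  intros WF LC T0Y fc gc kc kf kg Heq. pose proof Heq as [hp [hfg _]].
  assert (fh_gh : (fun e => f (h e)) = (fun e => g (h e))) by (apply functional_extensionality; exact hfg).
  apply equalizer_of_lifts.
  - apply UpV_T0.
  - apply UpV_map_perfect; assumption.
  - intros K. rewrite !UpV_map_comp by (assumption || exact (proj1 hp)). rewrite fh_gh; reflexivity.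
  - apply UpV_map_reflects_order; [exact (proj1 hp)|exact (equalizer_reflects_order E X Y h f g Heq)].
  - intros Z m mp Hm. exists (fun z => UpV_preimage h hp (m z)). split.
    + apply (continuous_comp (UpV_preimage h hp) m); [apply UpV_preimage_continuous|exact (proj1 mp)];
        assumption.
    + intros z. apply UpV_map_preimage. intros x Lx.
      assert (Hbal : up (img f (proj1_sig (m z))) = up (img g (proj1_sig (m z)))).
      { rewrite <- !UpV_map_val by assumption. rewrite Hm; reflexivity. }
      destruct (compact_equalized_below X Y f g k T0Y fc gc kc kf kg _ (proj1 (proj2_sig (m z))) Hbal x Lx)
        as [x' [Lx' [fgx' Hle]]].
      destruct (equalizer_image E X Y h f g Heq x' fgx') as [e <-]. exists e; split; assumption.
Qed.

Lemma LoV_preserves_equalizer {E X Y : space} (f g : X -> Y) (k : Y -> X) (h : E -> X) :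
  well_filtered E -> well_filtered X -> locally_compact X -> locally_compact Y -> T0 Y ->
  perfect f -> perfect g -> continuous k ->
  (forall x, k (f x) = x) -> (forall x, k (g x) = x) ->
  is_StComp_equalizer h f g ->
  is_StComp_equalizer (LoV_map h) (LoV_map f) (LoV_map g).
Proof.
  intros WFE WFX LCX LCY T0Y fp gp kc kf kg Heq. pose proof Heq as [hp [hfg _]].
  assert (hr := equalizer_reflects_order E X Y h f g Heq).
  assert (fh_gh : (fun e => f (h e)) = (fun e => g (h e))) by (apply functional_extensionality; exact hfg).
  apply equalizer_of_lifts.
  - apply LoV_T0.
  - apply LoV_map_perfect; assumption.
  - intros C. rewrite !LoV_map_comp by assumption. rewrite fh_gh; reflexivity.
  - apply LoV_map_reflects_order; assumption.
  - intros Z m mp Hm.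
    assert (Habove : forall z x, proj1_sig (m z) x ->
                       exists e, proj1_sig (m z) (h e) /\ spec_le x (h e)).
    { intros z x Cx.
      assert (Hbal : down (img f (proj1_sig (m z))) = down (img g (proj1_sig (m z)))).
      { rewrite <- !LoV_map_val by assumption. rewrite Hm; reflexivity. }
      destruct (closed_equalized_above X Y f g k T0Y (proj1 fp) (proj1 gp) kc kf kg _ WFX
                  (proj2_sig (m z)) Hbal x Cx) as [x' [Cx' [fgx' Hle]]].
      destruct (equalizer_image E X Y h f g Heq x' fgx') as [e <-]. exists e; split; assumption. }
    exists (fun z => LoV_preimage h (proj1 hp) (m z)). split.
    + apply LoV_preimage_continuous; [exact (proj1 mp)| |exact Habove].
      intros U HU. exists (open_hull h U); split; [apply open_hull_open; assumption|].
      intros e. symmetry. apply open_hull_trace; assumption.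
    + intros z. apply LoV_map_preimage; [assumption..|exact (Habove z)].
Qed.

Theorem proposition4p9 :
  forall (E X Y : space),
    stably_compact E -> stably_compact X -> stably_compact Y ->
  forall (f g : X -> Y) (k : Y -> X) (h : E -> X),
    perfect f -> perfect g -> perfect k ->
    (forall x, k (f x) = x) -> (forall x, k (g x) = x) ->
    is_StComp_equalizer h f g ->
    is_StComp_equalizer (UpV_map h) (UpV_map f) (UpV_map g) /\
    is_StComp_equalizer (LoV_map h) (LoV_map f) (LoV_map g).
Proof.
  intros E X Y [_ [_ [_ [_ WFE]]]] [_ [_ [LCX [_ WFX]]]] [T0Y [_ [LCY _]]]
    f g k h fp gp kp kf kg Heq.
  split.
  - exact (UpV_preserves_equalizer f g k h WFE LCX T0Y (proj1 fp) (proj1 gp) (proj1 kp) kf kg Heq).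
  - exact (LoV_preserves_equalizer f g k h WFE WFX LCX LCY T0Y fp gp (proj1 kp) kf kg Heq).
Qed.
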